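(* Let $(U,\mathcal{I})$ be a matroid, $f:2^U\to\mathbb{R}_{\ge0}$ a non-negative, monotonically non-decreasing submodular function, and $p\in(0,1)$. The triple of sets $(H,M,N)$ produced by $\mathrm{SIMULATE}$ has the same joint distribution as the triple $(H,M,N)$ produced by $\mathrm{ONLINE}$ (with the same $p$) when the elements of $U$ arrive in a uniformly random order.
   Context: Notation: $n=|U|$; $f_T(e)=f(T\cup\{e\})-f(T)$. All argmax choices below break ties by a fixed rule. $\mathrm{GREEDY}(H)$ for $H\subseteq U$: start with $T=\emptyset$; while some $e\in H\setminus T$ has $T\cup\{e\}\in\mathcal{I}$, add such an $e$ maximizing $f_T(e)$; return $T$. $\mathrm{ONLINE}$: draw $m\sim\mathrm{Binom}(n,p)$; let $H$ be the set of the first $m$ arriving elements (all rejected); $M=\mathrm{GREEDY}(H)$; $N=\emptyset$; for each subsequent arriving $e$, if $\mathrm{GREEDY}(H\cup\{e\})\neq\mathrm{GREEDY}(H)$ then add $e$ to $N$ (and accept it if it keeps the accepted set independent). $\mathrm{SIMULATE}$: each element of $U$ is independently put into $H$ with probability $p$. Start with $M=N=\emptyset$. While there exists $e\in U\setminus(M\cup N)$ with $M\cup\{e\}\in\mathcal{I}$, take such an $e$ maximizing $f_M(e)$; if $e\in H$ add it to $M$, otherwise add it to $N$. *)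

From mathcomp Require Import all_boot all_order fingroup perm all_algebra.
Set Implicit Arguments. Unset Strict Implicit. Unset Printing Implicit Defensive.
Import Order.TTheory GRing.Theory Num.Theory.
Local Open Scope ring_scope.

Section Defs.
Variables (R : realFieldType) (U : finType).

Definition is_matroid (I : {set {set U}}) : Prop :=
  [/\ set0 \in I,
      (forall A B : {set U}, B \in I -> A \subset B -> A \in I) &
      (forall A B : {set U}, A \in I -> B \in I -> (#|A| < #|B|)%N ->
         exists2 x, x \in B :\: A & x |: A \in I)].

Definition nonneg_fun (f : {set U} -> R) : Prop := forall A, 0 <= f A.
Definition monotone_fun (f : {set U} -> R) : Prop :=
  forall A B : {set U}, A \subset B -> f A <= f B.
Definition submodular (f : {set U} -> R) : Prop :=
  forall A B : {set U}, f (A :|: B) + f (A :&: B) <= f A + f B.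

Variables (I : {set {set U}}) (f : {set U} -> R) (rk : U -> nat).

Definition marg (T : {set U}) (e : U) : R := f (e |: T) - f T.

(* argmax of f_T over the candidate set C, ties broken by the fixed rule
   "smaller rank rk first" (rk is assumed injective). *)
Definition best (T C : {set U}) : option U :=
  [pick e in C | [forall e' in C,
     (marg T e' < marg T e) || ((marg T e' == marg T e) && (rk e <= rk e')%N)]].

Fixpoint greedy_iter (H : {set U}) (k : nat) (T : {set U}) : {set U} :=
  match k with
  | 0 => T
  | k'.+1 =>
    match best T [set e in H :\: T | e |: T \in I] with
    | None => T
    | Some e => greedy_iter H k' (e |: T)
    end
  end.

(* GREEDY(H); each step adds a new element, so #|U| iterations suffice. *)
Definition GREEDY (H : {set U}) : {set U} := greedy_iter H #|U| set0.

Fixpoint simulate_iter (H : {set U}) (k : nat) (MN : {set U} * {set U})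
  : {set U} * {set U} :=
  match k with
  | 0 => MN
  | k'.+1 =>
    match best MN.1 [set e | (e \notin MN.1 :|: MN.2) && (e |: MN.1 \in I)] with
    | None => MN
    | Some e =>
      simulate_iter H k'
        (if e \in H then (e |: MN.1, MN.2) else (MN.1, e |: MN.2))
    end
  end.

Definition SIMULATE (H : {set U}) : {set U} * {set U} * {set U} :=
  let MN := simulate_iter H #|U| (set0, set0) in (H, MN.1, MN.2).

Definition arrival (s : {perm U}) : seq U := map s (enum U).

Definition ONLINE (s : {perm U}) (m : nat) : {set U} * {set U} * {set U} :=
  let H := [set x in take m (arrival s)] in
  let N := [set e in drop m (arrival s) | GREEDY (e |: H) != GREEDY H] in
  (H, GREEDY H, N).

(* Pr[ SIMULATE outputs t ]: each element of U is in H independently w.p. p *)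
Definition prob_SIMULATE (p : R) (t : {set U} * {set U} * {set U}) : R :=
  \sum_(H : {set U})
     (p ^+ #|H| * (1 - p) ^+ (#|U| - #|H|)) * (SIMULATE H == t)%:R.

(* Pr[ ONLINE outputs t ]: uniformly random arrival order, independent
   m ~ Binom(#|U|, p). *)
Definition prob_ONLINE (p : R) (t : {set U} * {set U} * {set U}) : R :=
  \sum_(s : {perm U}) \sum_(m < #|U|.+1)
     (#|{perm U}|%:R)^-1
     * ('C(#|U|, m)%:R * p ^+ m * (1 - p) ^+ (#|U| - m))
     * (ONLINE s m == t)%:R.

End Defs.

(* SIMULATE flips the coin deciding whether e belongs to H only when greedy first
   considers e.  Its loop keeps the invariant [simulate_inv]: for every H' containing
   H and avoiding N, greedy run on H' passes through M.  When the loop stops, M is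
   therefore GREEDY(H), and N is the set of e outside H whose addition changes
   GREEDY(H): exactly what ONLINE computes from the set H of its first m arrivals.
   So both algorithms output the same function of H, and it remains to compare the
   laws of H: the first m ~ Binom(n, p) arrivals of a uniform order form a uniform
   m-subset, hence H = S with probability p^|S| (1 - p)^(n - |S|), as in SIMULATE. *)

From mathcomp Require Import all_boot all_order fingroup perm all_algebra.
From mathcomp Require Import ring.
Set Implicit Arguments. Unset Strict Implicit. Unset Printing Implicit Defensive.
Import Order.TTheory GRing.Theory Num.Theory.

Lemma mem_drop_uniq (T : eqType) (s : seq T) n x : uniq s -> x \in s ->
  (x \in drop n s) = (x \notin take n s).
Proof.
rewrite -{1 2}(cat_take_drop n s) cat_uniq mem_cat => /and3P[_ /hasPn dis _].
case/orP=> [xt | xd]; last by rewrite (negbTE (dis x xd)) xd.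
by rewrite xt; apply/negbTE/(contra (dis x)); rewrite negbK.
Qed.

Lemma cardsD_setU1_lt (T : finType) (A B : {set T}) x : x \in A :\: B ->
  #|A :\: (x |: B)| < #|A :\: B|.
Proof. by move=> xAB; rewrite setUC -setDDl; apply: proper_card; exact: properD1. Qed.

Lemma cardsC_setU1_lt (T : finType) (S : {set T}) x : x \notin S ->
  #|~: (x |: S)| < #|~: S|.
Proof. by move=> xS; rewrite -!setTD; apply: cardsD_setU1_lt; rewrite !inE xS. Qed.

Section PermImage.
Local Open Scope group_scope.
Variable T : finType.

Lemma exists_perm_imset (A B : {set T}) :
  #|A| = #|B| -> exists s : {perm T}, s @: A = B.
Proof.
move=> cAB.
(* Send the enumeration of A, then of ~: A, position by position onto that of B, then of ~: B. *)
pose la := enum A ++ enum (~: A); pose lb := enum B ++ enum (~: B).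
have ulb : uniq lb.
  by rewrite cat_uniq !enum_uniq andbT; apply/hasPn=> x; rewrite !mem_enum inE => ->.
have mem_la x : x \in la by rewrite mem_cat !mem_enum inE orbN.
have size_lab : size la = size lb by rewrite !size_cat -!cardE !cardsC.
pose g x := nth x lb (index x la).
have g_inj : injective g.
  move=> x y; rewrite /g (set_nth_default y) -?size_lab ?index_mem //.
  move=> /eqP; rewrite nth_uniq -?size_lab ?index_mem // => /eqP ixy.
  by rewrite -(nth_index x (mem_la x)) -(nth_index x (mem_la y)) ixy.
exists (perm g_inj); apply/eqP.
rewrite eqEcard card_imset ?cAB ?leqnn ?andbT; last exact: perm_inj.
apply/subsetP=> y /imsetP [x xA ->]; rewrite permE /g.
have ix : index x la < size (enum B).
  by rewrite index_cat mem_enum xA -cardE -cAB cardE index_mem mem_enum.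
by rewrite nth_cat ix -(mem_enum (mem B)) mem_nth.
Qed.

Definition perm_imset_count (A B : {set T}) := #|[set s : {perm T} | s @: A == B]|.

Lemma perm_imset_count_leq (A B : {set T}) (t : {perm T}) :
  perm_imset_count A B <= perm_imset_count A (t @: B).
Proof.
rewrite /perm_imset_count -(card_imset _ (mulIg t)); apply/subset_leq_card/subsetP.
move=> y /imsetP[s]; rewrite inE => /eqP sAB ->.
by rewrite inE -sAB -imset_comp; apply/eqP/eq_imset => x; rewrite permM.
Qed.

Lemma perm_imset_count_card (A B : {set T}) : #|A| = #|B| ->
  perm_imset_count A B = perm_imset_count A A.
Proof.
move=> cAB; have [t tAB] := exists_perm_imset cAB.
have [u uBA] := exists_perm_imset (esym cAB).
by apply/eqP; rewrite eqn_leq -{3}uBA -{3}tAB !perm_imset_count_leq.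
Qed.

Lemma bin_mul_perm_imset_count (A : {set T}) :
  ('C(#|T|, #|A|) * perm_imset_count A A)%N = #|{perm T}|.
Proof.
rewrite -card_draws -sum_nat_const -[RHS]sum1_card.
rewrite (partition_big (fun s : {perm T} => s @: A)
                      (mem [set B : {set T} | #|B| == #|A|])) /=.
  apply: eq_bigr => B; rewrite inE => /eqP cBA.
  rewrite -(perm_imset_count_card (esym cBA)) /perm_imset_count -sum1_card.
  by apply: eq_bigl => s; rewrite inE.
by move=> s _; rewrite inE card_imset //; apply: perm_inj.
Qed.

End PermImage.

Lemma disjoint_setU1l (T : finType) (x : T) (A B : {set T}) :
  [disjoint x |: A & B] = (x \notin B) && [disjoint A & B].
Proof. by rewrite -disjointU1; apply: eq_disjoint => y; rewrite !inE. Qed.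

Lemma disjoint_setU1r (T : finType) (x : T) (A B : {set T}) :
  [disjoint A & x |: B] = (x \notin A) && [disjoint A & B].
Proof. by rewrite disjoint_sym disjoint_setU1l disjoint_sym. Qed.

Section Arrival.
Variable U : finType.

Definition prefix_set m : {set U} := [set x in take m (enum U)].

Definition first_arrivals (s : {perm U}) m : {set U} :=
  [set x in take m (arrival s)].

Lemma card_prefix_set m : m <= #|U| -> #|prefix_set m| = m.
Proof.
move=> le_m; rewrite cardsE; move/card_uniqP: (take_uniq m (enum_uniq (mem U))) => ->.
by rewrite size_takel // -cardE.
Qed.

Lemma first_arrivalsE s m : first_arrivals s m = s @: prefix_set m.
Proof.
apply/setP=> x; rewrite inE /arrival -map_take.
by apply/mapP/imsetP => -[y y_take ->]; exists y; rewrite // inE in y_take *.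
Qed.

Lemma card_first_arrivals s m : m <= #|U| -> #|first_arrivals s m| = m.
Proof.
by move=> le_m; rewrite first_arrivalsE card_imset ?card_prefix_set //; apply: perm_inj.
Qed.

Lemma mem_drop_arrival (s : {perm U}) m (x : U) :
  (x \in drop m (arrival s)) = (x \notin take m (arrival s)).
Proof.
apply: mem_drop_uniq.
  by rewrite map_inj_uniq ?enum_uniq //; apply: perm_inj.
by apply/mapP; exists (s^-1 x)%g; rewrite ?mem_enum ?permKV.
Qed.

Lemma sum_first_arrivals (R : pzSemiRingType) (w : nat -> R) (H : {set U}) :
  (\sum_(s : {perm U}) \sum_(m < #|U|.+1) w m * (first_arrivals s m == H)%:R
   = w #|H| * (perm_imset_count (prefix_set #|H|) H)%:R)%R.
Proof.
have ltHU : #|H| < #|U|.+1 by rewrite ltnS max_card.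
rewrite (eq_bigr (fun s => w #|H| * (first_arrivals s #|H| == H)%:R)%R) => [|s _].
  rewrite -mulr_sumr; congr (_ * _)%R.
  rewrite /perm_imset_count -[#|[set s : {perm U} | _]|]sum1_card natr_sum.
  rewrite [RHS]big_mkcond /=.
  by apply: eq_bigr => s _; rewrite inE first_arrivalsE; case: (_ == _).
rewrite (bigD1 (Ordinal ltHU)) //= big1 ?addr0 // => m ne_mH.
case: eqP => [fH | _]; last by rewrite mulr0.
by case/eqP: ne_mH; apply: val_inj; rewrite /= -fH card_first_arrivals // -ltnS.
Qed.

Lemma bin_mul_perm_imset_count_prefix (H : {set U}) :
  ('C(#|U|, #|H|) * perm_imset_count (prefix_set #|H|) H)%N = #|{perm U}|.
Proof.
have cH : #|prefix_set #|H| | = #|H| by rewrite card_prefix_set ?max_card.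
by rewrite perm_imset_count_card // -{1}cH bin_mul_perm_imset_count.
Qed.

End Arrival.

Section Best.
Variables (R : realFieldType) (U : finType) (f : {set U} -> R) (rk : U -> nat).
Hypothesis rk_inj : injective rk.

Definition better (T : {set U}) : rel U := fun e e' =>
  ((marg f T e' < marg f T e) || ((marg f T e' == marg f T e) && (rk e <= rk e')%N))%R.

Lemma better_refl T : reflexive (better T).
Proof. by move=> e; rewrite /better eqxx leqnn orbT. Qed.

Lemma better_total T : total (better T).
Proof. by move=> e e'; rewrite /better; case: ltgtP => //= _; apply: leq_total. Qed.

Lemma better_trans T : transitive (better T).
Proof.
move=> e2 e1 e3; rewrite /better.
case/orP=> [lt12 | /andP[/eqP eq12 le12]]; case/orP=> [lt23 | /andP[/eqP eq23 le23]].
- by rewrite (lt_trans lt23 lt12).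
- by rewrite eq23 lt12.
- by rewrite -eq12 lt23.
- by rewrite eq23 eq12 eqxx (leq_trans le12 le23) orbT.
Qed.

Lemma better_anti T e e' : better T e e' -> better T e' e -> e = e'.
Proof.
rewrite /better; case: ltgtP => //= _ le1 le2.
by apply: rk_inj; apply/eqP; rewrite eqn_leq le1 le2.
Qed.

Lemma best_mem T C e : best f rk T C = Some e -> e \in C.
Proof. by rewrite /best; case: pickP => // x /andP[xC _] [<-]. Qed.

Lemma best_SomeP T C e :
  best f rk T C = Some e <-> e \in C /\ {in C, forall e', better T e e'}.
Proof.
rewrite /best; split; first by case: pickP => // x /andP[xC /forall_inP x_max] [<-].
move=> [eC e_max]; case: pickP => [x /andP[xC /forall_inP x_max] | no_best].
  by congr Some; apply: better_anti (x_max _ eC) (e_max _ xC).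
by have /negP[] := no_best e; rewrite /= eC; apply/forall_inP.
Qed.

Lemma best_None T C : best f rk T C = None -> C = set0.
Proof.
move=> no_best; apply/setP=> x; rewrite inE; apply/negbTE/negP => xC.
have [e eC e_max] := @extremumP _ _ (better T) x (mem C) id
  (@better_refl T) (@better_trans T) (@better_total T) xC.
move: no_best; rewrite /best; case: pickP => // no_pick _.
have /negP[] := no_pick e; apply/andP; split; first exact: eC.
by apply/forall_inP => e' e'C; apply: e_max.
Qed.

Lemma best_subset (T C C' : {set U}) e :
  best f rk T C = Some e -> e \in C' -> C' \subset C -> best f rk T C' = Some e.
Proof.
move=> /best_SomeP[_ e_max] eC' /subsetP sC'C; apply/best_SomeP; split=> // e' /sC'C.
exact: e_max.
Qed.

End Best.

Section Greedy.
Variables (R : realFieldType) (U : finType) (I : {set {set U}})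
  (f : {set U} -> R) (rk : U -> nat).

Definition greedy_cand (H T : {set U}) := [set e in H :\: T | e |: T \in I].

Definition greedy_from (H T : {set U}) := greedy_iter I f rk H #|U| T.

Lemma best_greedy_cand_mem (H T : {set U}) e :
  best f rk T (greedy_cand H T) = Some e -> e \in H :\: T.
Proof. by move/best_mem; rewrite inE => /andP[]. Qed.

Lemma greedy_iter_supset (H T : {set U}) k : T \subset greedy_iter I f rk H k T.
Proof.
elim: k T => [|k IH] T //=; case: best => [e|] //.
by apply: subset_trans (IH _); apply: subsetUr.
Qed.

Lemma greedy_iter_subset (H T : {set U}) k : greedy_iter I f rk H k T \subset H :|: T.
Proof.
elim: k T => [|k IH] T /=; first exact: subsetUr.
case E: best => [e|]; last exact: subsetUr.
apply: subset_trans (IH _) _; rewrite -/(greedy_cand H T) in E.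
have /setDP[eH _] := best_greedy_cand_mem E.
by rewrite setUCA subUset sub1set inE eH subxx.
Qed.

Lemma greedy_iter_stop (H T : {set U}) k :
  greedy_cand H T = set0 -> greedy_iter I f rk H k T = T.
Proof.
move=> no_cand; case: k => //= k; rewrite -/(greedy_cand H T) no_cand.
by case E: best => [e|] //; move: (best_mem E); rewrite inE.
Qed.

Lemma greedy_iter_fuel (H T : {set U}) k : #|H :\: T| <= k ->
  greedy_iter I f rk H k.+1 T = greedy_iter I f rk H k T.
Proof.
elim: k T => [|k IH] T le_k /=; rewrite -/(greedy_cand H T).
all: case E: best => [e|] //; have eHT := best_greedy_cand_mem E.
  by move: le_k eHT; rewrite leqn0 cards_eq0 => /eqP ->; rewrite inE.
by apply: IH; rewrite -ltnS; apply: leq_trans le_k; apply: cardsD_setU1_lt.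
Qed.

Lemma greedy_from_step (H T : {set U}) e :
  best f rk T (greedy_cand H T) = Some e -> greedy_from H T = greedy_from H (e |: T).
Proof.
move=> E; have eHT := best_greedy_cand_mem E.
have lt_U := leq_trans (cardsD_setU1_lt eHT) (max_card _).
rewrite /greedy_from; case: #|U| lt_U => // n lt_n.
by rewrite [RHS]greedy_iter_fuel //= -/(greedy_cand H T) E.
Qed.

Lemma greedy_from_stop (H T : {set U}) : greedy_cand H T = set0 -> greedy_from H T = T.
Proof. exact: greedy_iter_stop. Qed.

End Greedy.

Section Simulation.
Variables (R : realFieldType) (U : finType) (I : {set {set U}})
  (f : {set U} -> R) (rk : U -> nat).
Hypothesis rk_inj : injective rk.

Local Notation greedy_from := (greedy_from I f rk).
Local Notation GREEDY := (GREEDY I f rk).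

Definition simulate_cand (M N : {set U}) :=
  [set e | (e \notin M :|: N) && (e |: M \in I)].

Definition greedy_outcome (H : {set U}) : {set U} * {set U} :=
  (GREEDY H, [set e in ~: H | GREEDY (e |: H) != GREEDY H]).

Lemma greedy_cand_subset (H M N : {set U}) :
  [disjoint N & H] -> greedy_cand I H M \subset simulate_cand M N.
Proof.
move=> dis_NH; apply/subsetP=> x; rewrite !inE negb_or => /andP[/andP[-> xH] ->].
by rewrite (disjointFl dis_NH xH).
Qed.

Lemma greedy_from_simulate_step (H M N : {set U}) x :
  best f rk M (simulate_cand M N) = Some x -> x \in H -> [disjoint N & H] ->
  greedy_from H M = greedy_from H (x |: M).
Proof.
move=> E xH dis_NH; apply/greedy_from_step/(best_subset rk_inj E).
  by move: (best_mem E); rewrite !inE negb_or xH => /andP[/andP[-> _] ->].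
exact: greedy_cand_subset.
Qed.

Lemma greedy_from_simulate_stop (H M N : {set U}) :
  simulate_cand M N = set0 -> [disjoint N & H] -> greedy_from H M = M.
Proof.
move=> no_cand dis_NH; apply: greedy_from_stop; apply/eqP; rewrite -subset0 -no_cand.
exact: greedy_cand_subset.
Qed.

Definition simulate_inv (H M N : {set U}) : Prop :=
  [/\ [disjoint N & H],
      forall H' : {set U}, H \subset H' -> [disjoint N & H'] ->
        greedy_from H' set0 = greedy_from H' M
    & {in N, forall e, e \in greedy_from (e |: H) set0}].

Lemma simulate_inv0 H : simulate_inv H set0 set0.
Proof. by split=> [|//|e]; rewrite ?inE // -setI_eq0 set0I. Qed.

Lemma simulate_inv_stepM (H M N : {set U}) x :
  best f rk M (simulate_cand M N) = Some x -> x \in H ->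
  simulate_inv H M N -> simulate_inv H (x |: M) N.
Proof.
move=> E xH [dis_NH eq_M mem_N]; split=> [//| H' sHH' dis_NH' | //].
by rewrite eq_M // (greedy_from_simulate_step E (subsetP sHH' x xH) dis_NH').
Qed.

Lemma simulate_inv_stepN (H M N : {set U}) x :
  best f rk M (simulate_cand M N) = Some x -> x \notin H ->
  simulate_inv H M N -> simulate_inv H M (x |: N).
Proof.
move=> E xH [dis_NH eq_M mem_N].
have /andP[xN _] : (x \notin N) && (x |: M \in I).
  by move: (best_mem E); rewrite !inE negb_or => /andP[/andP[_ ->] ->].
split; first by rewrite disjoint_setU1l xH.
  by move=> H' sHH'; rewrite disjoint_setU1l => /andP[_]; apply: eq_M.
move=> e; rewrite !inE; case/predU1P => [-> | eN]; last exact: mem_N.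
have dis_NxH : [disjoint N & x |: H] by rewrite disjoint_setU1r xN.
rewrite eq_M ?subsetUr // (greedy_from_simulate_step E) ?setU11 //.
by apply/(subsetP (greedy_iter_supset I f rk (x |: H) (x |: M) #|U|)); rewrite setU11.
Qed.

Lemma simulate_inv_final (H M N : {set U}) :
  simulate_inv H M N -> simulate_cand M N = set0 -> (M, N) = greedy_outcome H.
Proof.
move=> [dis_NH eq_M mem_N] no_cand.
have gH : GREEDY H = M.
  by rewrite [GREEDY H]eq_M // (greedy_from_simulate_stop no_cand).
congr (_, _) => //; apply/setP=> e; rewrite !inE gH.
have [eN | eN] := boolP (e \in N).
  rewrite (disjointFr dis_NH eN) /=; apply/esym/negP=> /eqP gM.
  have := subsetP (greedy_iter_subset I f rk H set0 #|U|); rewrite setU0 => /(_ e).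
  by rewrite -/(GREEDY H) gH -gM mem_N // (disjointFr dis_NH eN) => /(_ isT).
have [eH | eH] //= := boolP (e \in H).
have dis_NeH : [disjoint N & e |: H] by rewrite disjoint_setU1r eN.
by rewrite [GREEDY _]eq_M ?subsetUr // (greedy_from_simulate_stop no_cand) ?eqxx.
Qed.

Lemma simulate_iter_outcome (H M N : {set U}) k : #|~: (M :|: N)| <= k ->
  simulate_inv H M N -> simulate_iter I f rk H k (M, N) = greedy_outcome H.
Proof.
elim: k M N => [|k IH] M N le_k inv.
  apply: simulate_inv_final => //; apply/eqP; rewrite -subset0.
  apply/subsetP=> x; rewrite !inE => /andP[xMN _].
  by move: le_k; rewrite leqn0 cards_eq0 => /eqP/setP/(_ x); rewrite !inE xMN.
rewrite /= -/(simulate_cand M N); case E: best => [x|]; last first.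
  exact: simulate_inv_final inv (best_None E).
have xMN : x \notin M :|: N by move: (best_mem E); rewrite inE => /andP[].
have lt_k := leq_trans (cardsC_setU1_lt xMN) le_k.
case: ifP => xH; apply: IH.
- by rewrite -setUA.
- exact: simulate_inv_stepM.
- by rewrite setUCA.
- by apply: simulate_inv_stepN; rewrite ?xH.
Qed.

Lemma SIMULATE_outcome (H : {set U}) :
  SIMULATE I f rk H = (H, GREEDY H, [set e in ~: H | GREEDY (e |: H) != GREEDY H]).
Proof.
by rewrite /SIMULATE simulate_iter_outcome ?max_card //; apply: simulate_inv0.
Qed.

Lemma ONLINE_SIMULATE (s : {perm U}) m :
  ONLINE I f rk s m = SIMULATE I f rk (first_arrivals s m).
Proof.
rewrite SIMULATE_outcome /ONLINE; congr (_, _, _); apply/setP => e.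
by rewrite !inE mem_drop_arrival.
Qed.

End Simulation.

Local Open Scope ring_scope.

Theorem lemma1 (R : realFieldType) (U : finType) (I : {set {set U}})
  (f : {set U} -> R) (rk : U -> nat) (p : R) :
  is_matroid I -> nonneg_fun f -> monotone_fun f -> submodular f ->
  injective rk -> 0 < p < 1 ->
  forall t : {set U} * {set U} * {set U},
    prob_SIMULATE I f rk p t = prob_ONLINE I f rk p t.
Proof.
move=> _ _ _ _ rk_inj _ t; set n := #|U|.
pose w m : R := (#|{perm U}|%:R)^-1 * ('C(n, m)%:R * p ^+ m * (1 - p) ^+ (n - m)).
have weightE (H : {set U}) : p ^+ #|H| * (1 - p) ^+ (n - #|H|)
    = w #|H| * (perm_imset_count (prefix_set U #|H|) H)%:R.
  have nCc := bin_mul_perm_imset_count_prefix H; rewrite -/n in nCc.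
  have : ('C(n, #|H|) * perm_imset_count (prefix_set U #|H|) H)%:R != 0 :> R.
    by rewrite nCc pnatr_eq0 -lt0n; apply/card_gt0P; exists 1%g.
  rewrite /w -nCc natrM mulf_eq0 negb_or => /andP[nzC nzc].
  by field; rewrite nzC nzc.
transitivity (\sum_(H : {set U}) \sum_(s : {perm U}) \sum_(m < n.+1)
    w m * (first_arrivals s m == H)%:R * (SIMULATE I f rk H == t)%:R).
  apply: eq_bigr => H _; rewrite weightE -sum_first_arrivals mulr_suml.
  by apply: eq_bigr => s _; rewrite mulr_suml.
rewrite exchange_big; apply: eq_bigr => s _; rewrite exchange_big; apply: eq_bigr => m _ /=.
rewrite ONLINE_SIMULATE // (bigD1 (first_arrivals s m)) //= eqxx mulr1 big1 ?addr0 // => H neH.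
by rewrite eq_sym (negbTE neH) mulr0 mul0r.
Qed.
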